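(* Let $\beta\in[0,1]$ and let $f\in C^{3+\beta}$ with $f'>0$ on $[A,B]$. Then there is a constant $C$ depending only on $f$ (and $[A,B]$) such that for all $x_1,x_2,x_3\in[A,B]$, $$ {\rm D}(x_1,x_2,x_3;f)=1+(x_1-x_3)\left(\frac{f''(x_1)}{2f'(x_1)}+\frac{1}{6}Sf(x_1)(x_2+x_3-2x_1)+R\right),\qquad |R|\le C\Delta^{1+\beta}, $$ where $\Delta=\max\{x_1,x_2,x_3\}-\min\{x_1,x_2,x_3\}$.
   Context: The ratio distortion of three points with respect to a strictly increasing function $f$ is ${\rm D}(x_1,x_2,x_3;f)=\frac{f(x_1)-f(x_2)}{x_1-x_2}:\frac{f(x_2)-f(x_3)}{x_2-x_3}$; for smooth $f$ with $f'\neq0$ it is defined for non-distinct points by replacing any ratio $(f(a)-f(a))/(a-a)$ with $f'(a)$ (equivalently, by continuity). The Schwarzian derivative is $Sf=\frac{f'''}{f'}-\frac{3}{2}\left(\frac{f''}{f'}\right)^2$. $C^{3+\beta}$ means three times differentiable with $\beta$-Hölder third derivative ($\beta=0$: continuous third derivative). *)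

From Stdlib Require Import Reals.
From Coquelicot Require Import Coquelicot.
Open Scope R_scope.

Definition inI (A B x : R) : Prop := A <= x <= B.

Definition deriv_on (A B : R) (f g : R -> R) : Prop :=
  forall x, inI A B x ->
    filterlim (fun y => (f y - f x) / (y - x))
      (within (fun y => inI A B y /\ y <> x) (locally x)) (locally (g x)).

Definition cont_on (A B : R) (g : R -> R) : Prop :=
  forall x, inI A B x ->
    filterlim g (within (inI A B) (locally x)) (locally (g x)).

Definition holder_on (A B beta : R) (g : R -> R) : Prop :=
  exists K, forall x y, inI A B x -> inI A B y -> x <> y ->
    Rabs (g x - g y) <= K * Rpower (Rabs (x - y)) beta.

(* f is C^{3+beta} on [A,B] with derivatives f1, f2, f3:
   third derivative continuous (beta = 0 case) and beta-Hoelder. *)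
Definition C3beta_on (A B beta : R) (f f1 f2 f3 : R -> R) : Prop :=
  deriv_on A B f f1 /\ deriv_on A B f1 f2 /\ deriv_on A B f2 f3 /\
  cont_on A B f3 /\ holder_on A B beta f3.

(* x^a for x >= 0, with 0^a = 0 for a > 0 and 0^0 = 1 *)
Definition powr (x a : R) : R :=
  if Req_EM_T x 0 then (if Req_EM_T a 0 then 1 else 0) else Rpower x a.

Definition dquot (f f1 : R -> R) (a b : R) : R :=
  if Req_EM_T a b then f1 a else (f a - f b) / (a - b).

Definition ratio_dist (f f1 : R -> R) (x1 x2 x3 : R) : R :=
  dquot f f1 x1 x2 / dquot f f1 x2 x3.

Definition schwarzian (f1 f2 f3 : R -> R) (x : R) : R :=
  f3 x / f1 x - 3 / 2 * (f2 x / f1 x) ^ 2.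

From Stdlib Require Import Reals Lra.
From Coquelicot Require Import Coquelicot.
Open Scope R_scope.

(* D(x1,x2,x3;f) - 1 = (x1 - x3) f[x1,x2,x3] / f[x2,x3], with f[.,.,.] the second divided
   difference.  Taylor's formula of order three, with the remainder controlled by the Hoelder
   modulus w = K Delta^beta of f''' on the hull of the three points, gives
     f[x1,x2,x3] = f''(x1)/2 + f'''(x1) (x2 + x3 - 2 x1)/6 + O(w Delta),
     f[x2,x3]    = f'(x1) + f''(x1) (x2 + x3 - 2 x1)/2 + O(Delta^2),
   and expanding the quotient produces the Schwarzian term; Delta^2 <= (B-A)^(1-beta) Delta^(1+beta)
   absorbs the remaining errors.  The first expansion is done around the point p lying between
   the other two, a and c: there f[a,p,c] = (f[p,a] - f[p,c])/(a - c) with both first divided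
   differences based at p, and their Taylor errors w (a-p)^2 + w (c-p)^2 are at most
   w Delta |a - c|; moving the base point from p to x1 costs another O(w Delta).  Derivatives
   being one-sided at A and B, all Taylor bounds come from iterating the mean value theorem. *)

(* [g (clamp a b y)] is continuous everywhere and differentiable on (a,b) as soon as [g] is
   differentiable within [a,b], so the mean value theorem of [MVT_gen] applies to it. *)
Definition clamp (a b y : R) : R := Rmax a (Rmin b y).

Lemma clamp_id a b y : a <= y <= b -> clamp a b y = y.
Proof. unfold clamp, Rmax, Rmin; intros; repeat destruct Rle_dec; lra. Qed.

Lemma clamp_in a b y : a <= b -> a <= clamp a b y <= b.
Proof. unfold clamp, Rmax, Rmin; intros; repeat destruct Rle_dec; lra. Qed.

Lemma clamp_dist a b x y : a <= x <= b -> Rabs (clamp a b y - x) <= Rabs (y - x).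
Proof.
  unfold clamp, Rmax, Rmin, Rabs; intros.
  repeat destruct Rle_dec; repeat destruct Rcase_abs; lra.
Qed.

Lemma dquot_sym f f1 a b : dquot f f1 a b = dquot f f1 b a.
Proof.
  unfold dquot; destruct (Req_EM_T a b), (Req_EM_T b a); subst; try congruence.
  field; lra.
Qed.

Lemma dquot_mul f f1 a b : dquot f f1 a b * (a - b) = f a - f b.
Proof. unfold dquot; destruct (Req_EM_T a b); [subst; ring | field; lra]. Qed.

Lemma Rabs_div_le x y k : Rabs x <= k * Rabs y -> y <> 0 -> Rabs (x / y) <= k.
Proof.
  intros H Hy; rewrite Rabs_div by exact Hy.
  apply Rle_div_l; [apply Rabs_pos_lt, Hy | exact H].
Qed.

Lemma Rabs_div_le_den x y d : 0 < d -> d <= y -> Rabs (x / y) <= Rabs x / d.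
Proof.
  intros Hd Hy; rewrite Rabs_div, (Rabs_pos_eq y) by lra.
  apply Rmult_le_compat_l; [apply Rabs_pos | apply Rinv_le_contravar; lra].
Qed.

Lemma Rdiv_le_compat_r x y d : 0 < d -> x <= y -> x / d <= y / d.
Proof. intros Hd Hxy; apply Rmult_le_compat_r; [left; apply Rinv_0_lt_compat, Hd | exact Hxy]. Qed.

Section DerivOn.
Variables (A B : R) (g g' : R -> R).
Hypothesis dg : deriv_on A B g g'.

Lemma deriv_on_eps x : inI A B x -> forall eps, 0 < eps -> exists d, 0 < d /\
  forall y, inI A B y -> y <> x -> Rabs (y - x) < d ->
    Rabs ((g y - g x) / (y - x) - g' x) < eps.
Proof.
  intros Hx eps Heps.
  destruct (proj1 (filterlim_locally _ _) (dg x Hx) (mkposreal eps Heps)) as [d Hd].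
  exists d; split; [apply cond_pos|].
  intros y Hy Hyx Hyd; exact (Hd y Hyd (conj Hy Hyx)).
Qed.

Lemma deriv_on_lipschitz_at x : inI A B x -> exists d, 0 < d /\
  forall y, inI A B y -> Rabs (y - x) < d -> Rabs (g y - g x) <= (Rabs (g' x) + 1) * Rabs (y - x).
Proof.
  intros Hx; destruct (deriv_on_eps x Hx 1 Rlt_0_1) as [d [Hd H]].
  exists d; split; [exact Hd|]; intros y Hy Hyd.
  destruct (Req_dec y x) as [->|Hyx].
  { rewrite !Rminus_eq_0, Rabs_R0; lra. }
  replace (g y - g x) with (((g y - g x) / (y - x) - g' x + g' x) * (y - x)) by (field; lra).
  rewrite Rabs_mult; apply Rmult_le_compat_r; [apply Rabs_pos|].
  pose proof (H y Hy Hyx Hyd); pose proof (Rabs_triang ((g y - g x) / (y - x) - g' x) (g' x)); lra.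
Qed.

Lemma continuity_pt_clamp a b x : A <= a -> b <= B -> a <= x <= b ->
  continuity_pt (fun y => g (clamp a b y)) x.
Proof.
  intros Ha Hb Hx.
  destruct (deriv_on_lipschitz_at x ltac:(unfold inI; lra)) as [d [Hd H]].
  set (k := Rabs (g' x) + 1).
  assert (Hk : 0 < k) by (pose proof (Rabs_pos (g' x)); unfold k; lra).
  intros eps Heps.
  exists (Rmin d (eps / k)); split.
  { apply Rmin_glb_lt; [lra | apply Rdiv_lt_0_compat; lra]. }
  intros y [_ Hy]; simpl in *; unfold R_dist in *.
  pose proof (Rmin_l d (eps / k)); pose proof (Rmin_r d (eps / k)).
  pose proof (clamp_dist a b x y Hx); pose proof (clamp_in a b y ltac:(lra)).
  rewrite (clamp_id a b x Hx).
  apply Rle_lt_trans with (k * Rabs (y - x)).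
  - eapply Rle_trans; [apply H; unfold inI; lra|].
    apply Rmult_le_compat_l; lra.
  - replace eps with (k * (eps / k)) by (field; lra).
    apply Rmult_lt_compat_l; lra.
Qed.

Lemma derivable_pt_lim_clamp a b x : A <= a -> b <= B -> a < x < b ->
  derivable_pt_lim (fun y => g (clamp a b y)) x (g' x).
Proof.
  intros Ha Hb Hx eps Heps.
  destruct (deriv_on_eps x ltac:(unfold inI; lra) eps Heps) as [d [Hd H]].
  assert (Hpos : 0 < Rmin d (Rmin (x - a) (b - x))) by (repeat apply Rmin_glb_lt; lra).
  exists (mkposreal _ Hpos); intros h Hh Hhd; simpl in Hhd.
  pose proof (Rmin_l d (Rmin (x - a) (b - x))); pose proof (Rmin_r d (Rmin (x - a) (b - x))).
  pose proof (Rmin_l (x - a) (b - x)); pose proof (Rmin_r (x - a) (b - x)).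
  assert (Hh1 : Rabs h < x - a) by lra; assert (Hh2 : Rabs h < b - x) by lra.
  apply Rabs_def2 in Hh1; apply Rabs_def2 in Hh2.
  rewrite !clamp_id by lra.
  replace h with (x + h - x) at 2 by ring.
  apply H; [unfold inI; lra | lra | replace (x + h - x) with h by ring; lra].
Qed.

Lemma deriv_on_MVT (q q' : R -> R) a b : (forall t, derivable_pt_lim q t (q' t)) ->
  A <= a -> a <= b -> b <= B ->
  exists c, a <= c <= b /\ (g b - q b) - (g a - q a) = (g' c - q' c) * (b - a).
Proof.
  intros Hq Ha Hab Hb.
  destruct (MVT_gen (fun y => g (clamp a b y) - q y) a b (fun y => g' y - q' y)) as [c [Hc Heq]];
    rewrite ?Rmin_left, ?Rmax_right in * by lra.
  - intros x Hx; apply is_derive_Reals, derivable_pt_lim_minus; [|apply Hq].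
    apply derivable_pt_lim_clamp; lra.
  - intros x Hx; apply continuity_pt_minus; [apply continuity_pt_clamp; lra|].
    apply derivable_continuous_pt; exists (q' x); apply Hq.
  - exists c; split; [exact Hc|]; rewrite <- Heq, !clamp_id by lra; ring.
Qed.

Lemma deriv_on_mean_value_bound (q q' : R -> R) a b M :
  (forall t, derivable_pt_lim q t (q' t)) -> inI A B a -> inI A B b ->
  (forall t, Rmin a b <= t <= Rmax a b -> Rabs (g' t - q' t) <= M) ->
  Rabs ((g b - q b) - (g a - q a)) <= M * Rabs (b - a).
Proof.
  intros Hq.
  assert (Hle : forall a b, inI A B a -> inI A B b -> a <= b ->
    (forall t, a <= t <= b -> Rabs (g' t - q' t) <= M) ->
    Rabs ((g b - q b) - (g a - q a)) <= M * Rabs (b - a)).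
  { clear a b; intros a b Ha Hb Hab HM; unfold inI in *.
    destruct (deriv_on_MVT q q' a b Hq ltac:(lra) Hab ltac:(lra)) as [c [Hc ->]].
    rewrite Rabs_mult; apply Rmult_le_compat_r; [apply Rabs_pos | apply HM; lra]. }
  intros Ha Hb HM; destruct (Rle_dec a b).
  - rewrite Rmin_left, Rmax_right in HM by lra; apply Hle; auto.
  - rewrite Rmin_right, Rmax_left in HM by lra.
    rewrite <- Rabs_Ropp, (Rabs_minus_sym b a).
    replace (- _) with ((g a - q a) - (g b - q b)) by ring.
    apply Hle; auto; lra.
Qed.

Lemma deriv_on_remainder_bound (q q' : R -> R) p y M n :
  (forall t, derivable_pt_lim q t (q' t)) -> inI A B p -> inI A B y ->
  g p = q p -> 0 <= M ->
  (forall t, Rmin p y <= t <= Rmax p y -> Rabs (g' t - q' t) <= M * Rabs (t - p) ^ n) ->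
  Rabs (g y - q y) <= M * Rabs (y - p) ^ S n.
Proof.
  intros Hq Hp Hy Hgp HM Hbound.
  replace (g y - q y) with ((g y - q y) - (g p - q p)) by (rewrite Hgp; ring).
  rewrite <- tech_pow_Rmult, (Rmult_comm (Rabs (y - p))), <- Rmult_assoc.
  apply (deriv_on_mean_value_bound q q'); auto.
  intros t Ht; eapply Rle_trans; [apply Hbound, Ht|].
  apply Rmult_le_compat_l; [exact HM|]; apply pow_incr; split; [apply Rabs_pos|].
  revert Ht; unfold Rmin, Rmax, Rabs; repeat destruct Rle_dec; repeat destruct Rcase_abs; lra.
Qed.

Lemma deriv_on_bounded : exists M, forall t, inI A B t -> Rabs (g t) <= M.
Proof.
  destruct (Rle_dec A B) as [AB|AB]; [|exists 0; unfold inI; intros; lra].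
  assert (Hc : forall c, A <= c <= B -> continuity_pt (fun y => g (clamp A B y)) c)
    by (intros; apply continuity_pt_clamp; lra).
  destruct (continuity_ab_maj _ A B AB Hc) as [xM [HM _]].
  destruct (continuity_ab_min _ A B AB Hc) as [xm [Hm _]].
  exists (Rabs (g (clamp A B xM)) + Rabs (g (clamp A B xm))); intros t Ht.
  specialize (HM t Ht); specialize (Hm t Ht); simpl in HM, Hm.
  rewrite (clamp_id A B t Ht) in HM, Hm.
  pose proof (Rle_abs (g (clamp A B xM))); pose proof (Rabs_pos (g (clamp A B xM))).
  pose proof (Rabs_pos (g (clamp A B xm))); pose proof (Rabs_maj2 (g (clamp A B xm))).
  unfold Rabs at 1; destruct Rcase_abs; lra.
Qed.

Lemma deriv_on_pos_lower_bound : (forall t, inI A B t -> 0 < g t) ->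
  exists m, 0 < m /\ forall t, inI A B t -> m <= g t.
Proof.
  intros Hpos; destruct (Rle_dec A B) as [AB|AB]; [|exists 1; unfold inI; split; intros; lra].
  destruct (continuity_ab_min (fun y => g (clamp A B y)) A B AB) as [xm [Hm Hxm]].
  { intros; apply continuity_pt_clamp; lra. }
  exists (g (clamp A B xm)); split.
  - apply Hpos, clamp_in, AB.
  - intros t Ht; specialize (Hm t Ht); simpl in Hm; rewrite (clamp_id A B t Ht) in Hm; exact Hm.
Qed.

Lemma dquot_ge m a b : (forall t, inI A B t -> m <= g' t) -> inI A B a -> inI A B b ->
  m <= dquot g g' a b.
Proof.
  intros Hm.
  assert (Hle : forall a b, inI A B a -> inI A B b -> a < b -> m <= dquot g g' a b).
  { clear a b; intros a b Ha Hb Hab; unfold inI in *.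
    destruct (deriv_on_MVT (fun _ => 0) (fun _ => 0) a b (fun t => derivable_pt_lim_const 0 t)
      ltac:(lra) ltac:(lra) ltac:(lra)) as [c [Hc Heq]].
    unfold dquot; destruct (Req_EM_T a b); [lra|].
    replace ((g a - g b) / (a - b)) with (g' c) by (field_simplify_eq; lra).
    apply Hm; unfold inI; lra. }
  intros Ha Hb; destruct (Rtotal_order a b) as [Hab|[<-|Hab]].
  - apply Hle; auto.
  - unfold dquot; destruct (Req_EM_T a a); [apply Hm, Ha | congruence].
  - rewrite dquot_sym; apply Hle; auto.
Qed.

End DerivOn.

Ltac poly_derivative := intros ?; apply is_derive_Reals; auto_derive; auto; simpl; field.

(* The second divided difference f[a,b,c]; it is junk (0) when a = c. *)
Definition dquot2 (f f1 : R -> R) (a b c : R) : R :=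
  (dquot f f1 a b - dquot f f1 b c) / (a - c).

Lemma dquot2_rev f f1 a b c : a <> c -> dquot2 f f1 a b c = dquot2 f f1 c b a.
Proof.
  intros Hac; unfold dquot2; rewrite (dquot_sym f f1 a b), (dquot_sym f f1 b c); field; lra.
Qed.

Lemma dquot2_swap12 f f1 a b c : a <> c -> b <> c -> dquot2 f f1 a b c = dquot2 f f1 b a c.
Proof.
  intros Hac Hbc.
  assert (Hcross : (dquot f f1 a b - dquot f f1 b c) * (b - c)
                   = (dquot f f1 b a - dquot f f1 a c) * (a - c)).
  { rewrite (dquot_sym f f1 b a).
    pose proof (dquot_mul f f1 a b); pose proof (dquot_mul f f1 b c);
      pose proof (dquot_mul f f1 a c); lra. }
  unfold dquot2.
  replace (dquot f f1 a b - dquot f f1 b c)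
    with ((dquot f f1 b a - dquot f f1 a c) * (a - c) / (b - c)) by (rewrite <- Hcross; field; lra).
  field; lra.
Qed.

Lemma ratio_dist_dquot2 f f1 x1 x2 x3 : dquot f f1 x2 x3 <> 0 ->
  ratio_dist f f1 x1 x2 x3 = 1 + (x1 - x3) * (dquot2 f f1 x1 x2 x3 / dquot f f1 x2 x3).
Proof.
  intros HD; unfold ratio_dist.
  destruct (Req_dec x1 x3) as [<-|H13].
  - rewrite (dquot_sym f f1 x2 x1); field; rewrite <- dquot_sym; exact HD.
  - unfold dquot2; field; lra.
Qed.

Section Taylor.
Variables (A B lo hi w : R) (f f1 f2 f3 : R -> R).
Hypotheses (d0 : deriv_on A B f f1) (d1 : deriv_on A B f1 f2) (d2 : deriv_on A B f2 f3).
Hypotheses (Alo : A <= lo) (hiB : hi <= B).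
Hypothesis osc : forall t s, lo <= t <= hi -> lo <= s <= hi -> Rabs (f3 t - f3 s) <= w.

Lemma osc_nonneg p : lo <= p <= hi -> 0 <= w.
Proof. intros Hp; eapply Rle_trans; [apply Rabs_pos | apply (osc p p Hp Hp)]. Qed.

Lemma between_in p y t : lo <= p <= hi -> lo <= y <= hi -> Rmin p y <= t <= Rmax p y ->
  lo <= t <= hi.
Proof. unfold Rmin, Rmax; repeat destruct Rle_dec; lra. Qed.

Lemma taylor1_bound p y : lo <= p <= hi -> lo <= y <= hi ->
  Rabs (f2 y - (f2 p + f3 p * (y - p))) <= w * Rabs (y - p).
Proof.
  intros Hp Hy; rewrite <- (pow_1 (Rabs (y - p))).
  apply (deriv_on_remainder_bound A B f2 f3 d2 (fun t => f2 p + f3 p * (t - p)) (fun _ => f3 p));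
    [poly_derivative | unfold inI; lra | unfold inI; lra | cbv beta; field |
     exact (osc_nonneg p Hp) |].
  intros t Ht; rewrite pow_O, Rmult_1_r; apply osc; auto; exact (between_in p y t Hp Hy Ht).
Qed.

Lemma taylor2_bound p y : lo <= p <= hi -> lo <= y <= hi ->
  Rabs (f1 y - (f1 p + f2 p * (y - p) + f3 p * (y - p) ^ 2 / 2)) <= w * Rabs (y - p) ^ 2.
Proof.
  intros Hp Hy.
  apply (deriv_on_remainder_bound A B f1 f2 d1
    (fun t => f1 p + f2 p * (t - p) + f3 p * (t - p) ^ 2 / 2) (fun t => f2 p + f3 p * (t - p)));
    [poly_derivative | unfold inI; lra | unfold inI; lra | cbv beta; field |
     exact (osc_nonneg p Hp) |].
  intros t Ht; rewrite pow_1; apply taylor1_bound; auto; exact (between_in p y t Hp Hy Ht).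
Qed.

Lemma taylor3_bound p y : lo <= p <= hi -> lo <= y <= hi ->
  Rabs (f y - (f p + f1 p * (y - p) + f2 p * (y - p) ^ 2 / 2 + f3 p * (y - p) ^ 3 / 6))
    <= w * Rabs (y - p) ^ 3.
Proof.
  intros Hp Hy.
  apply (deriv_on_remainder_bound A B f f1 d0
    (fun t => f p + f1 p * (t - p) + f2 p * (t - p) ^ 2 / 2 + f3 p * (t - p) ^ 3 / 6)
    (fun t => f1 p + f2 p * (t - p) + f3 p * (t - p) ^ 2 / 2));
    [poly_derivative | unfold inI; lra | unfold inI; lra | cbv beta; field |
     exact (osc_nonneg p Hp) |].
  intros t Ht; apply taylor2_bound; auto; exact (between_in p y t Hp Hy Ht).
Qed.

Lemma dquot_taylor_bound p a : lo <= p <= hi -> lo <= a <= hi ->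
  Rabs (dquot f f1 p a - (f1 p + f2 p * (a - p) / 2 + f3 p * (a - p) ^ 2 / 6))
    <= w * (a - p) ^ 2.
Proof.
  intros Hp Ha; unfold dquot; destruct (Req_EM_T p a) as [<-|Hpa].
  - rewrite Rminus_eq_0; replace (f1 p - _) with 0 by field; rewrite Rabs_R0.
    pose proof (osc_nonneg p Hp); nra.
  - replace (_ - _) with
      ((f a - (f p + f1 p * (a - p) + f2 p * (a - p) ^ 2 / 2 + f3 p * (a - p) ^ 3 / 6)) / (a - p))
      by (field; lra).
    apply Rabs_div_le; [|lra].
    replace (w * (a - p) ^ 2 * Rabs (a - p)) with (w * Rabs (a - p) ^ 3)
      by (rewrite <- (pow2_abs (a - p)); ring).
    apply taylor3_bound; auto.
Qed.

Lemma f1_taylor1_bound p t : lo <= p <= hi -> lo <= t <= hi ->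
  Rabs (f1 t - (f1 p + f2 p * (t - p))) <= (w + Rabs (f3 p) / 2) * (hi - lo) ^ 2.
Proof.
  intros Hp Ht.
  replace (f1 t - _) with
    ((f1 t - (f1 p + f2 p * (t - p) + f3 p * (t - p) ^ 2 / 2)) + f3 p / 2 * (t - p) ^ 2) by field.
  eapply Rle_trans; [apply Rabs_triang|].
  rewrite Rabs_mult, Rabs_div, (Rabs_pos_eq 2), (Rabs_pos_eq ((t - p) ^ 2))
    by (try apply pow2_ge_0; lra).
  assert (Htp : (t - p) ^ 2 <= (hi - lo) ^ 2).
  { rewrite <- (pow2_abs (t - p)).
    apply pow_incr; split; [apply Rabs_pos | unfold Rabs; destruct Rcase_abs; lra]. }
  pose proof (taylor2_bound p t Hp Ht) as Htaylor; rewrite pow2_abs in Htaylor.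
  pose proof (osc_nonneg p Hp); pose proof (Rabs_pos (f3 p)).
  assert (w * (t - p) ^ 2 <= w * (hi - lo) ^ 2) by (apply Rmult_le_compat_l; lra).
  assert (Rabs (f3 p) / 2 * (t - p) ^ 2 <= Rabs (f3 p) / 2 * (hi - lo) ^ 2)
    by (apply Rmult_le_compat_l; lra).
  lra.
Qed.

Lemma dquot_taylor2_bound p a b : lo <= p <= hi -> lo <= a <= hi -> lo <= b <= hi ->
  Rabs (dquot f f1 a b - (f1 p + f2 p * ((a - p) + (b - p)) / 2))
    <= (w + Rabs (f3 p) / 2) * (hi - lo) ^ 2.
Proof.
  intros Hp Ha Hb; unfold dquot; destruct (Req_EM_T a b) as [<-|Hab].
  - replace (f1 p + _) with (f1 p + f2 p * (a - p)) by field.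
    apply f1_taylor1_bound; auto.
  - set (q := fun t => f p + f1 p * (t - p) + f2 p * (t - p) ^ 2 / 2).
    replace (_ - _) with (((f a - q a) - (f b - q b)) / (a - b)) by (unfold q; field; lra).
    apply Rabs_div_le; [|lra].
    apply (deriv_on_mean_value_bound A B f f1 d0 q (fun t => f1 p + f2 p * (t - p)));
      [unfold q; poly_derivative | unfold inI; lra | unfold inI; lra |].
    intros t Ht; apply f1_taylor1_bound; auto; exact (between_in b a t Hb Ha Ht).
Qed.

Lemma dquot2_middle_bound a p c : lo <= a <= hi -> lo <= p <= hi -> lo <= c <= hi -> a <> c ->
  (a <= p <= c \/ c <= p <= a) ->
  Rabs (dquot2 f f1 a p c - (f2 p / 2 + f3 p * ((a - p) + (c - p)) / 6)) <= w * (hi - lo).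
Proof.
  intros Ha Hp Hc Hac Hmid.
  pose proof (dquot_taylor_bound p a Hp Ha) as Ea; pose proof (dquot_taylor_bound p c Hp Hc) as Ec.
  set (ea := dquot f f1 p a - _) in Ea; set (ec := dquot f f1 p c - _) in Ec.
  unfold dquot2; rewrite (dquot_sym f f1 a p).
  replace (_ - _) with ((ea - ec) / (a - c)) by (unfold ea, ec; field; lra).
  apply Rabs_div_le; [|lra].
  pose proof (Rabs_triang ea (- ec)) as Htri; rewrite Rabs_Ropp in Htri.
  replace (ea + - ec) with (ea - ec) in Htri by ring.
  assert (Hsq : (a - p) ^ 2 + (c - p) ^ 2 <= Rabs (a - c) * Rabs (a - c))
    by (rewrite <- Rabs_mult, Rabs_pos_eq by nra; destruct Hmid; nra).
  assert (Hac_le : Rabs (a - c) <= hi - lo) by (unfold Rabs; destruct Rcase_abs; lra).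
  pose proof (osc_nonneg p Hp); pose proof (Rabs_pos (a - c)).
  assert (w * (Rabs (a - c) * Rabs (a - c)) <= w * ((hi - lo) * Rabs (a - c)))
    by (apply Rmult_le_compat_l; [|apply Rmult_le_compat_r]; lra).
  assert (w * ((a - p) ^ 2 + (c - p) ^ 2) <= w * (Rabs (a - c) * Rabs (a - c)))
    by (apply Rmult_le_compat_l; lra).
  lra.
Qed.

Lemma model_shift_bound p x S : lo <= p <= hi -> lo <= x <= hi ->
  Rabs (S - 3 * p) <= 2 * (hi - lo) ->
  Rabs (f2 p / 2 + f3 p * (S - 3 * p) / 6 - (f2 x / 2 + f3 x * (S - 3 * x) / 6))
    <= w * (hi - lo).
Proof.
  intros Hp Hx HS.
  replace (_ - _) with ((f2 p - (f2 x + f3 x * (p - x))) / 2 + (f3 p - f3 x) * (S - 3 * p) / 6)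
    by field.
  pose proof (taylor1_bound x p Hx Hp); pose proof (osc p x Hp Hx); pose proof (osc_nonneg p Hp).
  assert (Rabs (p - x) <= hi - lo) by (unfold Rabs; destruct Rcase_abs; lra).
  assert (w * Rabs (p - x) <= w * (hi - lo)) by (apply Rmult_le_compat_l; lra).
  assert (Rabs (f3 p - f3 x) * Rabs (S - 3 * p) <= w * (2 * (hi - lo)))
    by (apply Rmult_le_compat; auto; apply Rabs_pos).
  eapply Rle_trans; [apply Rabs_triang|].
  rewrite !Rabs_div, Rabs_mult, (Rabs_pos_eq 2), (Rabs_pos_eq 6) by lra.
  assert (0 <= w * (hi - lo)) by (apply Rmult_le_pos; lra).
  lra.
Qed.

Lemma dquot2_near_model x1 x2 x3 : lo <= x1 <= hi -> lo <= x2 <= hi -> lo <= x3 <= hi -> x1 <> x3 ->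
  exists p, (p = x1 \/ p = x2 \/ p = x3) /\
    Rabs (dquot2 f f1 x1 x2 x3 - (f2 p / 2 + f3 p * (x1 + x2 + x3 - 3 * p) / 6)) <= w * (hi - lo).
Proof.
  intros H1 H2 H3 H13.
  (* [p] is the point lying between the other two; [dquot2_rev] and [dquot2_swap12] move it
     to the middle slot. *)
  destruct (Rle_dec x1 x2), (Rle_dec x2 x3), (Rle_dec x1 x3).
  all: first
    [ exists x2; split; [auto|];
      replace (x1 + x2 + x3 - 3 * x2) with ((x1 - x2) + (x3 - x2)) by ring;
      apply dquot2_middle_bound; auto; lra
    | exists x1; split; [auto|];
      rewrite (dquot2_swap12 f f1 x1 x2 x3) by lra;
      replace (x1 + x2 + x3 - 3 * x1) with ((x2 - x1) + (x3 - x1)) by ring;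
      apply dquot2_middle_bound; auto; lra
    | exists x3; split; [auto|];
      rewrite (dquot2_rev f f1 x1 x2 x3), (dquot2_swap12 f f1 x3 x2 x1) by lra;
      replace (x1 + x2 + x3 - 3 * x3) with ((x2 - x3) + (x1 - x3)) by ring;
      apply dquot2_middle_bound; auto; lra ].
Qed.

Lemma dquot2_taylor_bound x1 x2 x3 :
  lo <= x1 <= hi -> lo <= x2 <= hi -> lo <= x3 <= hi -> x1 <> x3 ->
  Rabs (dquot2 f f1 x1 x2 x3 - (f2 x1 / 2 + f3 x1 * (x2 + x3 - 2 * x1) / 6)) <= 2 * w * (hi - lo).
Proof.
  intros H1 H2 H3 H13.
  destruct (dquot2_near_model x1 x2 x3 H1 H2 H3 H13) as [p [Hp Hnear]].
  assert (Hpin : lo <= p <= hi) by (destruct Hp as [->|[->| ->]]; auto).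
  assert (HS : Rabs (x1 + x2 + x3 - 3 * p) <= 2 * (hi - lo))
    by (apply Rabs_le; destruct Hp as [->|[->| ->]]; lra).
  pose proof (model_shift_bound p x1 _ Hpin H1 HS) as Hshift.
  replace (x1 + x2 + x3 - 3 * x1) with (x2 + x3 - 2 * x1) in Hshift by ring.
  pose proof (Rabs_triang (dquot2 f f1 x1 x2 x3 - (f2 p / 2 + f3 p * (x1 + x2 + x3 - 3 * p) / 6))
    (f2 p / 2 + f3 p * (x1 + x2 + x3 - 3 * p) / 6 - (f2 x1 / 2 + f3 x1 * (x2 + x3 - 2 * x1) / 6))).
  replace (_ + _) with (dquot2 f f1 x1 x2 x3 - (f2 x1 / 2 + f3 x1 * (x2 + x3 - 2 * x1) / 6))
    in H by ring.
  lra.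
Qed.

End Taylor.

Lemma ratio_expansion_error a1 a2 a3 Dn Q s m : 0 < m -> m <= a1 -> m <= Dn ->
  Rabs (Q / Dn - (a2 / (2 * a1) + 1 / 6 * (a3 / a1 - 3 / 2 * (a2 / a1) ^ 2) * s)) <=
    Rabs (Q - (a2 / 2 + a3 * s / 6)) / m
    + Rabs (a2 / 2 + a3 * s / 6) * Rabs (Dn - (a1 + a2 * s / 2)) / m ^ 2
    + a2 ^ 2 * Rabs s * Rabs (Dn - a1) / (4 * m ^ 3)
    + Rabs (a3 * a2) * s ^ 2 / (12 * m ^ 2).
Proof.
  intros Hm H1 HD.
  set (T := a2 / 2 + a3 * s / 6); set (E := Dn - (a1 + a2 * s / 2)).
  assert (Hm2 : m ^ 2 <= a1 * Dn)
    by (replace (m ^ 2) with (m * m) by ring; apply Rmult_le_compat; lra).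
  assert (Hm3 : m ^ 3 <= a1 ^ 2 * Dn).
  { replace (m ^ 3) with (m ^ 2 * m) by ring.
    apply Rmult_le_compat; [apply pow_le | | apply pow_incr |]; lra. }
  replace (Q / Dn - _) with
    ((Q - T) / Dn - T * E / (a1 * Dn) + a2 ^ 2 * s * (Dn - a1) / (4 * a1 ^ 2 * Dn)
     - a3 * a2 * s ^ 2 / (12 * a1 * Dn)) by (unfold T, E; field; lra).
  assert (B1 : Rabs ((Q - T) / Dn) <= Rabs (Q - T) / m) by (apply Rabs_div_le_den; lra).
  assert (B2 : Rabs (T * E / (a1 * Dn)) <= Rabs T * Rabs E / m ^ 2)
    by (rewrite <- Rabs_mult; apply Rabs_div_le_den; [apply pow_lt | ]; lra).
  assert (B3 : Rabs (a2 ^ 2 * s * (Dn - a1) / (4 * a1 ^ 2 * Dn))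
               <= a2 ^ 2 * Rabs s * Rabs (Dn - a1) / (4 * m ^ 3)).
  { rewrite <- (Rabs_pos_eq (a2 ^ 2)) at 2 by apply pow2_ge_0.
    rewrite <- !Rabs_mult; apply Rabs_div_le_den; [pose proof (pow_lt m 3 Hm) |]; lra. }
  assert (B4 : Rabs (a3 * a2 * s ^ 2 / (12 * a1 * Dn)) <= Rabs (a3 * a2) * s ^ 2 / (12 * m ^ 2)).
  { rewrite <- (Rabs_pos_eq (s ^ 2)) at 2 by apply pow2_ge_0.
    rewrite <- Rabs_mult; apply Rabs_div_le_den; [pose proof (pow_lt m 2 Hm) |]; nra. }
  set (t1 := (Q - T) / Dn) in *; set (t2 := T * E / (a1 * Dn)) in *.
  set (t3 := a2 ^ 2 * s * (Dn - a1) / (4 * a1 ^ 2 * Dn)) in *.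
  set (t4 := a3 * a2 * s ^ 2 / (12 * a1 * Dn)) in *.
  pose proof (Rabs_triang (t1 - t2 + t3) (- t4)); pose proof (Rabs_triang (t1 - t2) t3).
  pose proof (Rabs_triang t1 (- t2)).
  rewrite Rabs_Ropp in *; unfold Rminus in *; lra.
Qed.

Definition ratio_const (m M2 M3 L c : R) : R :=
  (M2 / 2 + M3 * L / 3) * c / m ^ 2 + M2 ^ 2 * (c * L + M2) / (2 * m ^ 3) + M3 * M2 / (3 * m ^ 2).

Lemma expansion_coeff_bounds a1 a2 a3 Dn s M2 M3 D L c :
  Rabs a2 <= M2 -> Rabs a3 <= M3 -> Rabs s <= 2 * D -> 0 <= D <= L -> 0 <= c ->
  Rabs (Dn - (a1 + a2 * s / 2)) <= c * D ^ 2 ->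
  Rabs (a2 / 2 + a3 * s / 6) <= M2 / 2 + M3 * L / 3 /\ Rabs (Dn - a1) <= (c * L + M2) * D.
Proof.
  intros HM2 HM3 Hs HDL Hc HE.
  pose proof (Rabs_pos a2); pose proof (Rabs_pos a3); pose proof (Rabs_pos s).
  split.
  - eapply Rle_trans; [apply Rabs_triang|].
    rewrite !Rabs_div, Rabs_mult, (Rabs_pos_eq 2), (Rabs_pos_eq 6) by lra.
    assert (Rabs a3 * Rabs s <= M3 * (2 * L)) by (apply Rmult_le_compat; lra).
    lra.
  - replace (Dn - a1) with ((Dn - (a1 + a2 * s / 2)) + a2 * s / 2) by ring.
    eapply Rle_trans; [apply Rabs_triang|].
    rewrite Rabs_div, Rabs_mult, (Rabs_pos_eq 2) by lra.
    assert (Rabs a2 * Rabs s <= M2 * (2 * D)) by (apply Rmult_le_compat; lra).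
    assert (c * D ^ 2 <= c * L * D)
      by (replace (c * D ^ 2) with (c * D * D) by ring;
          replace (c * L * D) with (c * D * L) by ring;
          apply Rmult_le_compat_l; [apply Rmult_le_pos|]; lra).
    lra.
Qed.

Lemma ratio_expansion_bound a1 a2 a3 Dn Q s m M2 M3 D L eQ c :
  0 < m -> m <= a1 -> m <= Dn -> Rabs a2 <= M2 -> Rabs a3 <= M3 ->
  Rabs s <= 2 * D -> 0 <= D <= L -> 0 <= c ->
  Rabs (Q - (a2 / 2 + a3 * s / 6)) <= eQ -> Rabs (Dn - (a1 + a2 * s / 2)) <= c * D ^ 2 ->
  Rabs (Q / Dn - (a2 / (2 * a1) + 1 / 6 * (a3 / a1 - 3 / 2 * (a2 / a1) ^ 2) * s)) <=
    eQ / m + ratio_const m M2 M3 L c * D ^ 2.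
Proof.
  intros Hm H1 HD HM2 HM3 Hs HDL Hc HQ HE.
  destruct (expansion_coeff_bounds a1 a2 a3 Dn s M2 M3 D L c) as [HT HDa]; auto.
  eapply Rle_trans; [apply (ratio_expansion_error _ _ _ _ _ _ m); auto|].
  pose proof (Rabs_pos a2); pose proof (Rabs_pos s).
  pose proof (pow_lt m 2 Hm); pose proof (pow_lt m 3 Hm).
  assert (Ht1 : Rabs (Q - (a2 / 2 + a3 * s / 6)) / m <= eQ / m) by (apply Rdiv_le_compat_r; lra).
  assert (Ht2 : Rabs (a2 / 2 + a3 * s / 6) * Rabs (Dn - (a1 + a2 * s / 2)) / m ^ 2
                <= (M2 / 2 + M3 * L / 3) * c / m ^ 2 * D ^ 2).
  { replace ((M2 / 2 + M3 * L / 3) * c / m ^ 2 * D ^ 2)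
      with ((M2 / 2 + M3 * L / 3) * (c * D ^ 2) / m ^ 2) by (field; lra).
    apply Rdiv_le_compat_r; [lra|]; apply Rmult_le_compat; auto using Rabs_pos. }
  assert (Ht3 : a2 ^ 2 * Rabs s * Rabs (Dn - a1) / (4 * m ^ 3)
                <= M2 ^ 2 * (c * L + M2) / (2 * m ^ 3) * D ^ 2).
  { replace (M2 ^ 2 * (c * L + M2) / (2 * m ^ 3) * D ^ 2)
      with (M2 ^ 2 * (2 * D) * ((c * L + M2) * D) / (4 * m ^ 3)) by (field; lra).
    apply Rdiv_le_compat_r; [lra|]; rewrite <- (pow2_abs a2).
    apply Rmult_le_compat; auto using Rabs_pos.
    - apply Rmult_le_pos; auto using pow2_ge_0.
    - apply Rmult_le_compat; auto using pow2_ge_0; apply pow_incr; lra. }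
  assert (Ht4 : Rabs (a3 * a2) * s ^ 2 / (12 * m ^ 2) <= M3 * M2 / (3 * m ^ 2) * D ^ 2).
  { replace (M3 * M2 / (3 * m ^ 2) * D ^ 2) with (M3 * M2 * (2 * D) ^ 2 / (12 * m ^ 2))
      by (field; lra).
    apply Rdiv_le_compat_r; [lra|]; rewrite Rabs_mult, <- (pow2_abs s).
    apply Rmult_le_compat; [apply Rmult_le_pos; apply Rabs_pos | apply pow2_ge_0 | |].
    - apply Rmult_le_compat; auto using Rabs_pos.
    - apply pow_incr; lra. }
  unfold ratio_const; rewrite !Rmult_plus_distr_r; lra.
Qed.

Lemma Rpower_pos x a : 0 < Rpower x a.
Proof. apply exp_pos. Qed.

Lemma powr_nonneg x a : 0 <= powr x a.
Proof. unfold powr; destruct Req_EM_T; [destruct Req_EM_T; lra | left; apply Rpower_pos]. Qed.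

Lemma powr_one_plus D beta : 0 < D -> powr D (1 + beta) = D * Rpower D beta.
Proof.
  intros HD; unfold powr; destruct Req_EM_T; [lra|].
  rewrite Rpower_plus, Rpower_1 by exact HD; reflexivity.
Qed.

Lemma sq_le_powr D L beta : 0 < D <= L -> beta <= 1 ->
  D ^ 2 <= Rpower L (1 - beta) * powr D (1 + beta).
Proof.
  intros HDL Hbeta; rewrite powr_one_plus by lra.
  assert (HD : Rpower D beta * Rpower D (1 - beta) = D)
    by (rewrite <- Rpower_plus, Rplus_minus, Rpower_1; lra).
  assert (Hsq : Rpower D (1 - beta) * (D * Rpower D beta) = D ^ 2)
    by (transitivity (D * (Rpower D beta * Rpower D (1 - beta))); [ring | rewrite HD; ring]).
  rewrite <- Hsq; apply Rmult_le_compat_r.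
  - pose proof (Rpower_pos D beta); apply Rmult_le_pos; lra.
  - apply Rle_Rpower_l; lra.
Qed.

Lemma holder_scale_bound K m r D L beta : 0 <= K -> 0 < m -> 0 <= r -> 0 < D <= L -> beta <= 1 ->
  2 * (K * Rpower D beta) * D / m + r * D ^ 2
    <= (2 * K / m + r * Rpower L (1 - beta)) * powr D (1 + beta).
Proof.
  intros HK Hm Hr HD Hbeta.
  pose proof (sq_le_powr D L beta HD Hbeta) as Hsq; rewrite powr_one_plus in * by lra.
  assert (r * D ^ 2 <= r * (Rpower L (1 - beta) * (D * Rpower D beta)))
    by (apply Rmult_le_compat_l; auto).
  replace (2 * (K * Rpower D beta) * D / m) with (2 * K / m * (D * Rpower D beta)) by (field; lra).
  lra.
Qed.

Lemma holder_on_nonneg A B beta g : holder_on A B beta g ->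
  exists K, 0 <= K /\ forall x y, inI A B x -> inI A B y ->
    Rabs (g x - g y) <= K * Rpower (Rabs (x - y)) beta.
Proof.
  intros [K HK]; exists (Rabs K); split; [apply Rabs_pos|].
  intros x y Hx Hy; pose proof (Rpower_pos (Rabs (x - y)) beta).
  destruct (Req_dec x y) as [<-|Hxy].
  - rewrite Rminus_eq_0, Rabs_R0; apply Rmult_le_pos; [apply Rabs_pos | lra].
  - eapply Rle_trans; [apply HK; auto|]; apply Rmult_le_compat_r; [lra | apply Rle_abs].
Qed.

Section Holder.
Variables (A B beta K : R) (g : R -> R).
Hypotheses (beta0 : 0 <= beta) (K0 : 0 <= K).
Hypothesis HK : forall x y, inI A B x -> inI A B y ->
  Rabs (g x - g y) <= K * Rpower (Rabs (x - y)) beta.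

Lemma holder_oscillation lo hi : A <= lo -> hi <= B -> lo < hi ->
  forall t s, lo <= t <= hi -> lo <= s <= hi -> Rabs (g t - g s) <= K * Rpower (hi - lo) beta.
Proof.
  intros Alo hiB Hlohi t s Ht Hs; pose proof (Rpower_pos (hi - lo) beta).
  destruct (Req_dec t s) as [<-|Hts].
  - rewrite Rminus_eq_0, Rabs_R0; apply Rmult_le_pos; lra.
  - eapply Rle_trans; [apply HK; unfold inI; lra|].
    apply Rmult_le_compat_l; [lra|]; apply Rle_Rpower_l; [lra|]; split.
    + apply Rabs_pos_lt; lra.
    + unfold Rabs; destruct Rcase_abs; lra.
Qed.

Lemma holder_bounded : exists M, forall t, inI A B t -> Rabs (g t) <= M.
Proof.
  exists (Rabs (g A) + K * Rpower (B - A) beta); intros t Ht; unfold inI in Ht.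
  pose proof (Rpower_pos (B - A) beta).
  replace (g t) with ((g t - g A) + g A) by ring.
  eapply Rle_trans; [apply Rabs_triang|]; rewrite Rplus_comm; apply Rplus_le_compat_l.
  destruct (Req_dec t A) as [->|HtA].
  - rewrite Rminus_eq_0, Rabs_R0; apply Rmult_le_pos; lra.
  - apply holder_oscillation; lra.
Qed.

End Holder.

Lemma ratio_const_nonneg m M2 M3 L c : 0 < m -> 0 <= M2 -> 0 <= M3 -> 0 <= L -> 0 <= c ->
  0 <= ratio_const m M2 M3 L c.
Proof.
  intros Hm HM2 HM3 HL Hc; unfold ratio_const.
  pose proof (pow_lt m 2 Hm); pose proof (pow_lt m 3 Hm); pose proof (pow2_ge_0 M2).
  assert (0 <= (M2 / 2 + M3 * L / 3) * c) by (apply Rmult_le_pos; nra).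
  assert (0 <= M2 ^ 2 * (c * L + M2)) by (apply Rmult_le_pos; nra).
  repeat apply Rplus_le_le_0_compat; apply Rdiv_le_0_compat; nra.
Qed.

Section Remainder.
Variables (beta A B K M2 M3 m : R) (f f1 f2 f3 : R -> R).
Hypotheses (d0 : deriv_on A B f f1) (d1 : deriv_on A B f1 f2) (d2 : deriv_on A B f2 f3).
Hypotheses (beta01 : 0 <= beta <= 1) (K0 : 0 <= K) (m0 : 0 < m).
Hypothesis HK : forall x y, inI A B x -> inI A B y ->
  Rabs (f3 x - f3 y) <= K * Rpower (Rabs (x - y)) beta.
Hypothesis HM2 : forall t, inI A B t -> Rabs (f2 t) <= M2.
Hypothesis HM3 : forall t, inI A B t -> Rabs (f3 t) <= M3.
Hypothesis Hm : forall t, inI A B t -> m <= f1 t.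

Definition remainder_const : R :=
  2 * K / m
  + ratio_const m M2 M3 (B - A) (K * Rpower (B - A) beta + M3 / 2) * Rpower (B - A) (1 - beta).

Lemma remainder_bound x1 x2 x3 : inI A B x1 -> inI A B x2 -> inI A B x3 -> x1 <> x3 ->
  Rabs (dquot2 f f1 x1 x2 x3 / dquot f f1 x2 x3
        - (f2 x1 / (2 * f1 x1) + 1 / 6 * schwarzian f1 f2 f3 x1 * (x2 + x3 - 2 * x1)))
    <= remainder_const * powr (Rmax x1 (Rmax x2 x3) - Rmin x1 (Rmin x2 x3)) (1 + beta).
Proof.
  intros H1 H2 H3 H13.
  set (lo := Rmin x1 (Rmin x2 x3)); set (hi := Rmax x1 (Rmax x2 x3)).
  assert (Hspan : A <= lo /\ hi <= B /\ lo <= x1 <= hi /\ lo <= x2 <= hi /\ lo <= x3 <= hi)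
    by (unfold inI, lo, hi, Rmin, Rmax in *; repeat destruct Rle_dec; lra).
  destruct Hspan as [Alo [hiB [I1 [I2 I3]]]].
  set (D := hi - lo).
  assert (HD : 0 < D <= B - A) by (unfold D; destruct (Rdichotomy _ _ H13); lra).
  set (w := K * Rpower D beta).
  pose proof (holder_oscillation A B beta K f3 (proj1 beta01) K0 HK lo hi Alo hiB
    ltac:(unfold D in HD; lra)) as osc; fold D w in osc.
  pose proof (dquot2_taylor_bound A B lo hi w f f1 f2 f3 d0 d1 d2 Alo hiB osc x1 x2 x3 I1 I2 I3 H13)
    as HQ.
  pose proof (dquot_taylor2_bound A B lo hi w f f1 f2 f3 d0 d1 d2 Alo hiB osc x1 x2 x3 I1 I2 I3)
    as HE.
  replace ((x2 - x1) + (x3 - x1)) with (x2 + x3 - 2 * x1) in HE by ring; fold D in HQ, HE.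
  pose proof (HM2 x1 H1); pose proof (HM3 x1 H1).
  pose proof (Rabs_pos (f2 x1)); pose proof (Rabs_pos (f3 x1)).
  assert (0 <= K * Rpower (B - A) beta) by (apply Rmult_le_pos; [|left; apply Rpower_pos]; lra).
  set (c := K * Rpower (B - A) beta + M3 / 2).
  assert (Hc : w + Rabs (f3 x1) / 2 <= c).
  { assert (K * Rpower D beta <= K * Rpower (B - A) beta)
      by (apply Rmult_le_compat_l; [|apply Rle_Rpower_l]; lra).
    unfold w, c; lra. }
  pose proof (pow2_ge_0 D).
  unfold schwarzian; eapply Rle_trans.
  { apply (ratio_expansion_bound _ _ _ _ _ _ m M2 M3 D (B - A) (2 * w * D) c); auto.
    - apply (dquot_ge A B f f1 d0); auto.
    - apply Rabs_le; unfold D; lra.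
    - lra.
    - unfold c; lra.
    - eapply Rle_trans; [exact HE|]; apply Rmult_le_compat_r; lra. }
  fold lo hi D; unfold remainder_const, w; fold c.
  apply holder_scale_bound; auto; [|lra].
  apply ratio_const_nonneg; unfold c; lra.
Qed.

End Remainder.

Theorem proposition1 (beta A B : R) (f f1 f2 f3 : R -> R) :
  0 <= beta <= 1 ->
  C3beta_on A B beta f f1 f2 f3 ->
  (forall x, A <= x <= B -> 0 < f1 x) ->
  exists C : R, forall x1 x2 x3 : R,
    A <= x1 <= B -> A <= x2 <= B -> A <= x3 <= B ->
    exists Rm : R,
      ratio_dist f f1 x1 x2 x3 =
        1 + (x1 - x3) * (f2 x1 / (2 * f1 x1)
              + 1 / 6 * schwarzian f1 f2 f3 x1 * (x2 + x3 - 2 * x1) + Rm) /\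
      Rabs Rm <= C * powr (Rmax x1 (Rmax x2 x3) - Rmin x1 (Rmin x2 x3)) (1 + beta).
Proof.
  intros Hbeta [d0 [d1 [d2 [_ Hhol]]]] Hpos.
  destruct (holder_on_nonneg A B beta f3 Hhol) as [K [K0 HK]].
  destruct (holder_bounded A B beta K f3 (proj1 Hbeta) K0 HK) as [M3 HM3].
  destruct (deriv_on_bounded A B f2 f3 d2) as [M2 HM2].
  destruct (deriv_on_pos_lower_bound A B f1 f2 d1 Hpos) as [m [m0 Hm]].
  exists (Rmax 0 (remainder_const beta A B K M2 M3 m)); intros x1 x2 x3 H1 H2 H3.
  assert (HDn : 0 < dquot f f1 x2 x3)
    by (apply Rlt_le_trans with m; [exact m0 | apply (dquot_ge A B f f1 d0); auto]).
  rewrite ratio_dist_dquot2 by lra.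
  destruct (Req_dec x1 x3) as [<-|H13].
  - exists 0; split; [ring|].
    rewrite Rabs_R0; apply Rmult_le_pos; [apply Rmax_l | apply powr_nonneg].
  - exists (dquot2 f f1 x1 x2 x3 / dquot f f1 x2 x3
            - (f2 x1 / (2 * f1 x1) + 1 / 6 * schwarzian f1 f2 f3 x1 * (x2 + x3 - 2 * x1))).
    split; [ring|].
    eapply Rle_trans; [apply (remainder_bound beta A B K M2 M3 m f f1 f2 f3); auto|].
    apply Rmult_le_compat_r; [apply powr_nonneg | apply Rmax_r].
Qed.
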